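(* Let $\mathcal S \subseteq \mathsf P^n$ be the stabilizer group of an $n$-qubit stabilizer code and $\mathcal L = \mathcal S^\perp$ its group of logical operators. Let $\Gamma \subseteq 2^{\{1,\dots,n\}}$ be a set of supports, and consider Pauli channels of the form $P = \mathop{\ast}_{\gamma\in\Gamma} P_\gamma$ (convolution over $\gamma \in \Gamma$), where each $P_\gamma$ is a probability distribution on $\mathsf P^n$ with $P_\gamma(e)=0$ whenever $\operatorname{supp}(e)\not\subseteq\gamma$. Call such a $P$ correctable if (i) for all $\gamma_1,\gamma_2\in\Gamma$ the region $\gamma_1\cup\gamma_2$ is correctable, and (ii) $P(I)>\tfrac12$. Then for a correctable channel $P$ the logical channel $$P_L(e)=\frac{1}{|\mathcal S|}\sum_{s\in\mathcal S}P(es),\qquad e\in\mathsf P^n,$$ is uniquely determined by the stabilizer expectations (syndrome statistics) $E(s)=\sum_{e\in\mathsf P^n}\langle s,e\rangle P(e)$, $s\in\mathcal S$. That is, if $P$ and $P'$ are two correctable channels with the same set of supports $\Gamma$ and $\sum_e\langle s,e\rangle P(e)=\sum_e\langle s,e\rangle P'(e)$ for all $s\in\mathcal S$, then $P_L=P'_L$.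
   Context: $\mathsf P^n$ denotes the effective $n$-qubit Pauli group, i.e. the $n$-qubit Pauli group modulo phases $\{\pm1,\pm i\}$; it is Abelian. For $a,e\in\mathsf P^n$, $\langle a,e\rangle=+1$ if $a$ and $e$ commute in the Pauli group and $-1$ if they anticommute. For a subgroup $B$, $B^\perp=\{a\in\mathsf P^n:\langle a,b\rangle=+1\ \forall b\in B\}$. A stabilizer group is a subgroup $\mathcal S$ with $\mathcal S\subseteq\mathcal S^\perp$ (coming from a commuting subgroup of the Pauli group not containing $-I$). The support $\operatorname{supp}(e)$ is the set of qubits on which $e$ acts nontrivially. A region $R\subseteq\{1,\dots,n\}$ is correctable if every $l\in\mathcal L$ with $\operatorname{supp}(l)\subseteq R$ lies in $\mathcal S$. Convolution of functions on $\mathsf P^n$: $(f\ast g)(e)=\sum_{e'}f(e')g(ee')$. *)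

From HB Require Import structures.
From mathcomp Require Import all_boot all_order all_algebra.
From mathcomp Require Import reals.
Set Implicit Arguments. Unset Strict Implicit. Unset Printing Implicit Defensive.
Import Order.TTheory GRing.Theory Num.Theory.
Local Open Scope ring_scope.

(* Effective n-qubit Pauli group P^n (Paulis modulo phases): each qubit carries
   a pair (x,z) of bits, I=(0,0), X=(1,0), Z=(0,1), Y=(1,1). *)
Definition Pauli (n : nat) := {ffun 'I_n -> bool * bool}.

Definition pid (n : nat) : Pauli n := [ffun _ => (false, false)].

Definition pmul (n : nat) (a b : Pauli n) : Pauli n :=
  [ffun i => (((a i).1 (+) (b i).1), ((a i).2 (+) (b i).2))].

Definition anticomm (n : nat) (a e : Pauli n) : bool :=
  \big[addb/false]_(i < n) ((((a i).1 && (e i).2)) (+) ((a i).2 && (e i).1)).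

Definition pair_sign (R : realType) (n : nat) (a e : Pauli n) : R :=
  if anticomm a e then -1 else 1.

Definition supp (n : nat) (e : Pauli n) : {set 'I_n} :=
  [set i | e i != (false, false)].

Definition perp (n : nat) (B : {set Pauli n}) : {set Pauli n} :=
  [set a | [forall b in B, ~~ anticomm a b]].

Definition is_subgroup (n : nat) (S : {set Pauli n}) : Prop :=
  pid n \in S /\ (forall a b, a \in S -> b \in S -> pmul a b \in S).

Definition stabilizer_group (n : nat) (S : {set Pauli n}) : Prop :=
  is_subgroup S /\ S \subset perp S.

Definition correctable_region (n : nat) (S : {set Pauli n}) (Rg : {set 'I_n}) : Prop :=
  forall l, l \in perp S -> supp l \subset Rg -> l \in S.

Definition conv (R : realType) (n : nat) (f g : Pauli n -> R) : Pauli n -> R :=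
  fun e => \sum_(e' : Pauli n) f e' * g (pmul e e').

Definition delta_id (R : realType) (n : nat) : Pauli n -> R :=
  fun e => if e == pid n then 1 else 0.

Definition conv_family (R : realType) (n : nat) (Gamma : {set {set 'I_n}})
  (Pg : {set 'I_n} -> Pauli n -> R) : Pauli n -> R :=
  \big[(fun f g => conv f g)/(@delta_id R n)]_(g in Gamma) Pg g.

Definition is_distribution (R : realType) (n : nat) (p : Pauli n -> R) : Prop :=
  (forall e, 0 <= p e) /\ \sum_(e : Pauli n) p e = 1.

Definition local_family (R : realType) (n : nat) (Gamma : {set {set 'I_n}})
  (Pg : {set 'I_n} -> Pauli n -> R) : Prop :=
  forall g, g \in Gamma ->
    is_distribution (Pg g) /\ (forall e, ~~ (supp e \subset g) -> Pg g e = 0).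

Definition correctable_channel (R : realType) (n : nat) (S : {set Pauli n})
  (Gamma : {set {set 'I_n}}) (Pg : {set 'I_n} -> Pauli n -> R) : Prop :=
  local_family Gamma Pg /\
  (forall g1 g2, g1 \in Gamma -> g2 \in Gamma -> correctable_region S (g1 :|: g2)) /\
  conv_family Gamma Pg (pid n) > 1 / 2.

Definition stab_expect (R : realType) (n : nat) (P : Pauli n -> R) (s : Pauli n) : R :=
  \sum_(e : Pauli n) pair_sign R s e * P e.

Definition logical_channel (R : realType) (n : nat) (S : {set Pauli n})
  (P : Pauli n -> R) (e : Pauli n) : R :=
  (#|S|%:R)^-1 * \sum_(s in S) P (pmul e s).

From HB Require Import structures.
From mathcomp Require Import all_boot all_order all_algebra.
From mathcomp Require Import reals exp lra.
Set Implicit Arguments. Unset Strict Implicit. Unset Printing Implicit Defensive.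
Import Order.TTheory GRing.Theory Num.Theory.
Local Open Scope ring_scope.

(** The stabilizer expectations [E_P(a) = sum_e <a,e> P(e)] are the Fourier
    transform of [P] on the Abelian group [P^n]: they turn convolution into
    product, and the logical channel only depends on their values on [L = S^perp].
    Because [P(I) > 1/2], all [E_P(a)] are positive, so
    [G = ln E_P - ln E_P'] is a sum over [gamma] of functions of the restriction
    of [a] to [gamma]; hence the Fourier transform of [G] is supported on errors
    living in a single [gamma]. As [G] vanishes on [S], its Fourier transform sums
    to zero over every coset of [L]. Two supported errors in the same coset
    differ by a logical operator supported on some [gamma1 :|: gamma2], i.e. by a
    stabilizer, so every [l] in [L] has a constant sign on the supported part of
    each coset; Fourier inversion then gives [G(l) = 0]. *)

Section PauliGroup.
Variable n : nat.
Implicit Types (a b c e x y : Pauli n) (L : {set Pauli n}).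

Lemma pmulC a b : pmul a b = pmul b a.
Proof. by apply/ffunP=> i; rewrite !ffunE addbC [(a i).2 (+) _]addbC. Qed.

Lemma pmulA a b c : pmul a (pmul b c) = pmul (pmul a b) c.
Proof. by apply/ffunP=> i; rewrite !ffunE /= !addbA. Qed.

Lemma pmul1p a : pmul (pid n) a = a.
Proof. by apply/ffunP=> i; rewrite !ffunE /=; case: (a i). Qed.

Lemma pmulpp a : pmul a a = pid n.
Proof. by apply/ffunP=> i; rewrite !ffunE !addbb. Qed.

Lemma pmulK a b : pmul a (pmul a b) = b.
Proof. by rewrite pmulA pmulpp pmul1p. Qed.

Lemma pmul_inj a : injective (pmul a).
Proof. by move=> b c eq_bc; rewrite -(pmulK a b) eq_bc pmulK. Qed.

Lemma supp_pmul a b : supp (pmul a b) \subset supp a :|: supp b.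
Proof.
apply/subsetP=> i; rewrite !inE ffunE.
by case: (a i) => [[] []]; case: (b i) => [[] []].
Qed.

Lemma anticommC a b : anticomm a b = anticomm b a.
Proof.
rewrite /anticomm; apply: eq_bigr => i _.
by case: (a i) => [[] []]; case: (b i) => [[] []].
Qed.

Lemma anticommMl a b e : anticomm (pmul a b) e = anticomm a e (+) anticomm b e.
Proof.
rewrite /anticomm -big_split /=; apply: eq_bigr => i _; rewrite ffunE /=.
by case: (a i) => [[] []]; case: (b i) => [[] []]; case: (e i) => [[] []].
Qed.

Lemma anticommMr a b e : anticomm e (pmul a b) = anticomm e a (+) anticomm e b.
Proof. by rewrite anticommC anticommMl !(anticommC e). Qed.

Lemma anticomm_disjoint a e : [disjoint supp a & supp e] -> anticomm a e = false.
Proof.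
move=> dis; rewrite /anticomm big1 // => i _.
have [ia | ] := boolP (i \in supp a); last by rewrite inE negbK => /eqP->.
by move: (disjointFr dis ia); rewrite inE => /negbFE/eqP->; case: (a i) => [[] []].
Qed.

Lemma anticomm1p e : anticomm (pid n) e = false.
Proof.
by apply: anticomm_disjoint; apply/pred0P => i; rewrite /= !inE ffunE eqxx.
Qed.

Lemma anticomm_at e i :
  i \in supp e -> exists a, supp a \subset [set i] /\ anticomm a e.
Proof.
rewrite inE => ei.
exists [ffun j => if j == i then (if (e i).1 then (false, true) else (true, false))
                  else (false, false)]; split.
  by apply/subsetP => j; rewrite !inE ffunE; case: (j == i) => //; case: (e i).1.
rewrite /anticomm (bigD1 i) //= big1 => [|j /negPf ji]; last by rewrite ffunE ji.
by rewrite ffunE eqxx addbF; move: ei; case: (e i) => [[] []].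
Qed.

Lemma perp_subgroup L : is_subgroup (perp L).
Proof.
split; first by rewrite inE; apply/forallP => b; rewrite anticomm1p implybT.
move=> a b; rewrite !inE => /forallP aL /forallP bL; apply/forallP => c.
apply/implyP => cL.
by rewrite anticommMl (negPf (implyP (aL c) cL)) (negPf (implyP (bL c) cL)).
Qed.

Lemma perpT : perp [set: Pauli n] = [set pid n].
Proof.
apply/setP => x; rewrite in_set1.
apply/idP/eqP => [|->]; last exact: (perp_subgroup _).1.
rewrite inE => /forallP xT; apply/ffunP => i; rewrite ffunE.
apply/eqP/negPn/negP => xi.
have [a [_ ax]] : exists a, supp a \subset [set i] /\ anticomm a x.
  by apply: anticomm_at; rewrite inE.
by move: (xT a); rewrite in_setT anticommC ax.
Qed.

Lemma subgroupT : is_subgroup [set: Pauli n].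
Proof. by split=> *; rewrite in_setT. Qed.

Lemma subgroup_pmulr L x y :
  is_subgroup L -> x \in L -> (pmul x y \in L) = (y \in L).
Proof.
move=> [_ mulL] xL; apply/idP/idP => [xyL|]; last exact: mulL.
by rewrite -(pmulK x y); apply: mulL.
Qed.

Lemma subgroup_coset L x y z : is_subgroup L ->
  pmul x y \in L -> (pmul x z \in L) = (pmul y z \in L).
Proof.
move=> subL xyL; rewrite -(subgroup_pmulr (pmul y z) subL xyL).
by rewrite -pmulA pmulK.
Qed.

End PauliGroup.

Lemma ln_prod_norm (R : realType) (I : finType) (P : pred I) (F : I -> R) :
  0 < \prod_(i | P i) F i -> ln (\prod_(i | P i) F i) = \sum_(i | P i) ln `|F i|.
Proof.
move=> prod_gt0; have /prodf_neq0 F_neq0 := lt0r_neq0 prod_gt0.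
rewrite -[\prod_(i | P i) F i]gtr0_norm // normr_prod.
apply: (proj2 (big_ind2 (fun x y : R => 0 < x /\ ln x = y) _ _ _)) => [|x y u v|i Pi].
- by rewrite ln1.
- by move=> [x_gt0 <-] [u_gt0 <-]; rewrite mulr_gt0 // lnM.
- by rewrite normr_gt0 F_neq0.
Qed.

Section PauliExpectations.
Variables (R : realType) (n : nat).
Implicit Types (a b c e x : Pauli n) (H L S : {set Pauli n}) (f : Pauli n -> R).
Implicit Types (g : {set 'I_n}) (Gamma : {set {set 'I_n}}).
Implicit Types (Pg : {set 'I_n} -> Pauli n -> R).
Local Notation chi := (pair_sign R).
Local Notation N := (#|Pauli n|%:R : R).

Lemma chiC a b : chi a b = chi b a.
Proof. by rewrite /pair_sign anticommC. Qed.

Lemma chiMl a b e : chi (pmul a b) e = chi a e * chi b e.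
Proof.
rewrite /pair_sign anticommMl.
by case: (anticomm a e); case: (anticomm b e); rewrite /= ?mulN1r ?mul1r ?opprK.
Qed.

Lemma chiMr a b e : chi e (pmul a b) = chi e a * chi e b.
Proof. by rewrite chiC chiMl !(chiC e). Qed.

Lemma chi1p e : chi (pid n) e = 1.
Proof. by rewrite /pair_sign anticomm1p. Qed.

Lemma card_subgroup_neq0 H : is_subgroup H -> #|H|%:R != 0 :> R.
Proof. by case=> H1 _; rewrite pnatr_eq0 -lt0n; apply/card_gt0P; exists (pid n). Qed.

Lemma sum_translate_opp_eq0 (P : pred (Pauli n)) (F : Pauli n -> R) c :
  (forall e, P (pmul c e) = P e) -> (forall e, F (pmul c e) = - F e) ->
  \sum_(e | P e) F e = 0.
Proof.
move=> Pc Fc; apply/eqP; rewrite -eqNr -sumrN.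
rewrite (reindex_inj (@pmul_inj n c)) /=.
by apply/eqP/eq_big => [e | e _]; rewrite ?Pc ?Fc ?opprK.
Qed.

Lemma sum_chi_subgroup H x : is_subgroup H ->
  \sum_(h in H) chi x h = if x \in perp H then #|H|%:R else 0.
Proof.
move=> subH; case: ifP => [xH | /negbT].
  rewrite -sumr_const; apply: eq_bigr => h hH.
  by move: xH; rewrite inE => /forallP/(_ h); rewrite hH /pair_sign => /negPf->.
rewrite inE negb_forall => /existsP [h0]; rewrite negb_imply negbK => /andP [h0H xh0].
apply: (sum_translate_opp_eq0 (c := h0)) => [e | e]; first exact: subgroup_pmulr.
by rewrite chiMr {1}/pair_sign xh0 mulN1r.
Qed.

Lemma sum_chi x : \sum_a chi x a = if x == pid n then N else 0.
Proof.
rewrite -in_set1 -perpT -cardsT -(sum_chi_subgroup _ (subgroupT n)).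
by apply: eq_bigl => a; rewrite in_setT.
Qed.

Lemma card_Pauli_neq0 : N != 0.
Proof. by rewrite -cardsT card_subgroup_neq0 //; exact: subgroupT. Qed.

Lemma stab_expect_inversion f x : f x = N^-1 * \sum_a chi a x * stab_expect f a.
Proof.
apply: (mulfI card_Pauli_neq0).
rewrite mulrA mulfV ?card_Pauli_neq0 // mul1r /stab_expect.
transitivity (\sum_e f e * \sum_a chi (pmul x e) a).
  rewrite (bigD1 x) //= pmulpp sum_chi eqxx big1 ?addr0 1?mulrC // => e ex.
  rewrite sum_chi; case: eqP => [xe | _]; last by rewrite mulr0.
  by move: ex; rewrite -(pmulK x e) xe pmulC pmul1p eqxx.
under eq_bigr => e _ do rewrite big_distrr.
rewrite exchange_big; apply: eq_bigr => a _; rewrite big_distrr.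
by apply: eq_bigr => e _; rewrite /= chiMl !(chiC a) mulrCA [f e * _]mulrC.
Qed.

Lemma stab_expect1 f : stab_expect f (pid n) = \sum_e f e.
Proof. by apply: eq_bigr => e _; rewrite chi1p mul1r. Qed.

Lemma stab_expect_sum (I : finType) (P : pred I) (F : I -> Pauli n -> R) x :
  stab_expect (fun a => \sum_(i | P i) F i a) x = \sum_(i | P i) stab_expect (F i) x.
Proof.
rewrite /stab_expect; under eq_bigr => a _ do rewrite big_distrr.
by rewrite exchange_big.
Qed.

Lemma stab_expect_conv f f' a :
  stab_expect (conv f f') a = stab_expect f a * stab_expect f' a.
Proof.
rewrite /stab_expect /conv; under eq_bigr => x _ do rewrite big_distrr.
rewrite exchange_big big_distrl; apply: eq_bigr => e _.
rewrite (reindex_inj (@pmul_inj n e)) big_distrr; apply: eq_bigr => y _ /=.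
by rewrite (pmulC (pmul e y)) pmulK chiMr mulrACA.
Qed.

Lemma stab_expect_delta a : stab_expect (@delta_id R n) a = 1.
Proof.
rewrite /stab_expect (bigD1 (pid n)) //= big1 => [|e /negPf e1].
  by rewrite /delta_id eqxx chiC chi1p mulr1 addr0.
by rewrite /delta_id e1 mulr0.
Qed.

Lemma stab_expect_family Gamma Pg a :
  stab_expect (conv_family Gamma Pg) a = \prod_(g in Gamma) stab_expect (Pg g) a.
Proof.
apply: (big_morph (fun p => stab_expect p a)) => [p q|]; first exact: stab_expect_conv.
exact: stab_expect_delta.
Qed.

Lemma stab_expect_local g f a c :
  (forall e, ~~ (supp e \subset g) -> f e = 0) -> [disjoint supp c & g] ->
  stab_expect f (pmul a c) = stab_expect f a.
Proof.
move=> f_loc cg; apply: eq_bigr => e _; rewrite chiMl.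
have [eg | /f_loc->] := boolP (supp e \subset g); last by rewrite !mulr0.
rewrite {2}/pair_sign anticomm_disjoint ?mulr1 //.
by apply: disjointWr cg.
Qed.

Lemma stab_expect_supp g (h : Pauli n -> R) e :
  (forall a c, [disjoint supp c & g] -> h (pmul a c) = h a) ->
  ~~ (supp e \subset g) -> stab_expect h e = 0.
Proof.
move=> h_loc /subsetPn [i ei ig].
have [c [ci ce]] := anticomm_at ei.
have cg : [disjoint supp c & g].
  by apply: disjointWl ci _; rewrite disjoints1.
apply: (sum_translate_opp_eq0 (c := c)) => // a.
by rewrite chiMr {1}/pair_sign anticommC ce mulN1r pmulC h_loc // mulNr.
Qed.

Lemma stab_expect_gt0 f a :
  is_distribution f -> 1 / 2 < f (pid n) -> 0 < stab_expect f a.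
Proof.
move=> [f_ge0 f_sum1] f1.
rewrite /stab_expect (bigD1 (pid n)) //= chiC chi1p mul1r.
move: f_sum1; rewrite (bigD1 (pid n)) //= => f_sum1.
have : - \sum_(e | e != pid n) f e <= \sum_(e | e != pid n) chi a e * f e.
  rewrite -sumrN; apply: ler_sum => e _.
  by have := f_ge0 e; rewrite /pair_sign; case: ifP => _; lra.
lra.
Qed.

Lemma sum_coset_stab_expect S f e : is_subgroup S ->
  \sum_(s in S) f (pmul e s) =
  #|S|%:R / N * \sum_(a in perp S) chi a e * stab_expect f a.
Proof.
move=> subS.
under eq_bigr => s _ do rewrite (stab_expect_inversion f (pmul e s)).
rewrite -big_distrr exchange_big /= mulrAC mulrC; congr (_ * _).
rewrite big_distrr [RHS]big_mkcond; apply: eq_bigr => a _ /=.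
under eq_bigr => s _ do rewrite chiMr -mulrA.
rewrite -big_distrr -big_distrl sum_chi_subgroup //.
by case: ifP => _ /=; rewrite ?mul0r ?mulr0 // mulrCA.
Qed.

Lemma logical_channel_eq S f f' : is_subgroup S ->
  {in perp S, stab_expect f =1 stab_expect f'} ->
  logical_channel S f =1 logical_channel S f'.
Proof.
move=> subS eq_f e; rewrite /logical_channel !sum_coset_stab_expect //.
by congr (_ * (_ * _)); apply: eq_bigr => a /eq_f->.
Qed.

Lemma sum_chi_subgroup_stab_expect S f x : is_subgroup S ->
  \sum_(s in S) chi x s * f s =
  #|S|%:R / N * \sum_(e | pmul x e \in perp S) stab_expect f e.
Proof.
move=> subS.
under eq_bigr => s _ do rewrite (stab_expect_inversion f s) mulrCA big_distrr.
rewrite -big_distrr exchange_big /= mulrAC mulrC; congr (_ * _).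
rewrite big_distrr [RHS]big_mkcond; apply: eq_bigr => e _ /=.
under eq_bigr => s _ do rewrite mulrA -chiMl.
by rewrite -big_distrl sum_chi_subgroup //=; case: ifP; rewrite ?mul0r.
Qed.

Lemma sum_perp_coset_eq0 S f : is_subgroup S -> {in S, f =1 fun=> 0} ->
  forall x, \sum_(e | pmul x e \in perp S) stab_expect f e = 0.
Proof.
move=> subS f_S x; apply/eqP.
have /eqP : \sum_(s in S) chi x s * f s = 0.
  by rewrite big1 // => s /f_S->; rewrite mulr0.
rewrite sum_chi_subgroup_stab_expect // !mulf_eq0 invr_eq0.
by rewrite (negPf (card_subgroup_neq0 subS)) (negPf card_Pauli_neq0).
Qed.

Lemma sum_coset_invariant_eq0 L (F psi : Pauli n -> R) : is_subgroup L ->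
  (forall x, \sum_(e | pmul x e \in L) F e = 0) ->
  (forall x y, pmul x y \in L -> psi x = psi y) ->
  \sum_e psi e * F e = 0.
Proof.
move=> subL F_coset psi_coset.
apply: (mulfI (card_subgroup_neq0 subL)); rewrite mulr0 big_distrr /=.
transitivity (\sum_e F e * \sum_x (if pmul x e \in L then psi x else 0)).
  apply: eq_bigr => e _; rewrite mulrA [RHS]mulrC -big_mkcond; congr (_ * _).
  rewrite (reindex_inj (@pmul_inj n e)) /= mulr_natl -sumr_const.
  apply: eq_big => [x | x xL]; first by rewrite (pmulC (pmul e x)) pmulK.
  by apply: psi_coset; rewrite pmulK.
under eq_bigr => e _ do rewrite big_distrr.
rewrite exchange_big big1 // => x _ /=.
rewrite (eq_bigr (fun e => psi x * (if pmul x e \in L then F e else 0))) => [|e _].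
  by rewrite -big_distrr -big_mkcond /= F_coset mulr0.
by case: ifP; rewrite ?mulr0 // mulrC.
Qed.

Lemma sum_coset_support_eq0 L (D : pred (Pauli n)) (F phi : Pauli n -> R) :
  is_subgroup L ->
  (forall x, \sum_(e | pmul x e \in L) F e = 0) ->
  (forall e, F e != 0 -> D e) ->
  {in D &, forall a b, pmul a b \in L -> phi a = phi b} ->
  \sum_e phi e * F e = 0.
Proof.
move=> subL F_coset F_D phi_coset.
(* [oapp phi 0 \o rep] is constant on cosets and agrees with [phi] off the zeros of [F]. *)
pose rep x := [pick e | D e && (pmul x e \in L)].
have rep_coset x y : pmul x y \in L -> rep x = rep y.
  move=> xyL; apply: eq_pick => e.
  by rewrite /= (subgroup_coset _ subL xyL).
transitivity (\sum_e oapp phi 0 (rep e) * F e).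
  apply: eq_bigr => e _; have [-> | /F_D De] := eqVneq (F e) 0; first by rewrite !mulr0.
  congr (_ * _); rewrite /rep /=; case: pickP => [e' /andP [De' ee'] | /(_ e)] /=.
    exact: phi_coset.
  by rewrite De pmulpp subL.1.
by apply: sum_coset_invariant_eq0 subL F_coset _ => x y /rep_coset ->.
Qed.

Lemma conv_family_distribution Gamma Pg :
  local_family Gamma Pg -> is_distribution (conv_family Gamma Pg).
Proof.
move=> loc; split.
  apply: (big_ind (fun p : Pauli n -> R => forall e, 0 <= p e)).
  - by move=> e; rewrite /delta_id; case: eqP.
  - by move=> p q p_ge0 q_ge0 e; apply: sumr_ge0 => x _; rewrite mulr_ge0.
  - by move=> g /loc [[]].
rewrite -stab_expect1 stab_expect_family big1 // => g /loc [[_ sum1] _].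
by rewrite stab_expect1.
Qed.

Lemma ln_stab_expect_family Gamma Pg a :
  0 < stab_expect (conv_family Gamma Pg) a ->
  ln (stab_expect (conv_family Gamma Pg) a) =
  \sum_(g in Gamma) ln `|stab_expect (Pg g) a|.
Proof. by rewrite stab_expect_family; exact: ln_prod_norm. Qed.

Lemma stab_expect_sum_local_supp Gamma (h : {set 'I_n} -> Pauli n -> R) :
  (forall g, g \in Gamma ->
     forall a c, [disjoint supp c & g] -> h g (pmul a c) = h g a) ->
  forall e, stab_expect (fun a => \sum_(g in Gamma) h g a) e != 0 ->
  [exists g in Gamma, supp e \subset g].
Proof.
move=> h_loc e; apply: contraR; rewrite negb_exists => /forallP e_out.
rewrite stab_expect_sum big1 // => g gG; apply: stab_expect_supp (h_loc g gG) _.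
by move: (e_out g); rewrite gG.
Qed.

Lemma pair_sign_correctable_coset S g1 g2 e1 e2 l :
  correctable_region S (g1 :|: g2) -> supp e1 \subset g1 -> supp e2 \subset g2 ->
  pmul e1 e2 \in perp S -> l \in perp S -> chi e1 l = chi e2 l.
Proof.
move=> cor e1g e2g e12 lS.
have e12S : pmul e1 e2 \in S.
  by apply: cor e12 (subset_trans (supp_pmul _ _) (setUSS _ _)).
move: lS; rewrite inE => /forallP/(_ (pmul e1 e2)); rewrite e12S anticommMr.
by rewrite /pair_sign !(anticommC _ l); case: (anticomm l e1); case: (anticomm l e2).
Qed.

Lemma correctable_stab_expect_perp S Gamma Pg (Pg' : {set 'I_n} -> Pauli n -> R) :
  let E := stab_expect (conv_family Gamma Pg) in
  let E' := stab_expect (conv_family Gamma Pg') in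
  is_subgroup S -> correctable_channel S Gamma Pg -> correctable_channel S Gamma Pg' ->
  {in S, E =1 E'} -> {in perp S, E =1 E'}.
Proof.
move=> E E' subS [loc [cor P1]] [loc' [_ P1']] eq_S l lS.
have E_gt0 a : 0 < E a := stab_expect_gt0 a (conv_family_distribution loc) P1.
have E'_gt0 a : 0 < E' a := stab_expect_gt0 a (conv_family_distribution loc') P1'.
pose h g a := ln `|stab_expect (Pg g) a| - ln `|stab_expect (Pg' g) a|.
pose G a := \sum_(g in Gamma) h g a.
have G_ln a : G a = ln (E a) - ln (E' a) by rewrite /G sumrB !ln_stab_expect_family.
have G_S : {in S, G =1 fun=> 0} by move=> s sS; rewrite G_ln eq_S ?subrr.
have h_loc g : g \in Gamma -> forall a c, [disjoint supp c & g] -> h g (pmul a c) = h g a.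
  move=> gG a c cg; have [_ loc_g] := loc g gG; have [_ loc'_g] := loc' g gG.
  by rewrite /h !(stab_expect_local _ loc_g cg) !(stab_expect_local _ loc'_g cg).
have G_l : G l = 0.
  rewrite (stab_expect_inversion G l) (sum_coset_support_eq0 (phi := fun e => chi e l)
    (D := fun e => [exists g in Gamma, supp e \subset g]) (perp_subgroup S)
    (sum_perp_coset_eq0 subS G_S) (stab_expect_sum_local_supp h_loc)) ?mulr0 //.
  move=> e1 e2 /exists_inP [g1 g1G e1g] /exists_inP [g2 g2G e2g] e12.
  exact: pair_sign_correctable_coset (cor _ _ g1G g2G) e1g e2g e12 lS.
by apply: ln_inj; rewrite ?posrE //; apply/eqP; rewrite -subr_eq0 -G_ln G_l.
Qed.

End PauliExpectations.

Theorem theorem1 (R : realType) (n : nat) (S : {set Pauli n})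
  (Gamma : {set {set 'I_n}}) (Pg Pg' : {set 'I_n} -> Pauli n -> R) :
  stabilizer_group S ->
  correctable_channel S Gamma Pg ->
  correctable_channel S Gamma Pg' ->
  (forall s, s \in S ->
     stab_expect (conv_family Gamma Pg) s = stab_expect (conv_family Gamma Pg') s) ->
  forall e : Pauli n,
    logical_channel S (conv_family Gamma Pg) e = logical_channel S (conv_family Gamma Pg') e.
Proof.
move=> [subS _] P_cor P'_cor eq_S.
apply: (logical_channel_eq subS).
exact: correctable_stab_expect_perp subS P_cor P'_cor eq_S.
Qed.
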